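(* Let $\theta>0$, let $L\ge 1$ be an integer, let $K(x,y)=\exp(-\theta|x-y|)$ on $[0,1]$, and let $\mathbf U=\{0\cdot 2^{-L},1\cdot 2^{-L},\dots,2^L\cdot 2^{-L}\}$ be the set of $M=2^L+1$ inducing points (written as a vector in some fixed order). Then there exists an invertible $M\times M$ matrix $\mathbf P_{\mathbf U}$ with $K(\mathbf U,\mathbf U)=\mathbf P_{\mathbf U}\mathbf P_{\mathbf U}^\top$ such that, for all $x\in[0,1]$, the row vector $\phi(x):=K(x,\mathbf U)\mathbf P_{\mathbf U}^{-\top}\in\mathbb R^{1\times M}$ has as its entries exactly the $M$ functions $\psi_{01}(x),\psi_{02}(x)$ and $\psi_{lm}(x)$ for $l=1,\dots,L$, $m\in\{1,3,\dots,2^l-1\}$ (defined in the context). Consequently, for every function $f$ on $[0,1]$, the inducing-point approximation satisfies $K(x,\mathbf U)[K(\mathbf U,\mathbf U)]^{-1}f(\mathbf U)=\phi(x)\mathbf w$ with $\mathbf w:=\mathbf P_{\mathbf U}^{-1}f(\mathbf U)$, and if $f$ is a centered Gaussian process with covariance $K$ then $\mathbf w\sim\mathcal N(\mathbf 0,\mathbf I_M)$. Moreover, for every $l\ge1$ and odd $m$, $\psi_{lm}$ vanishes outside $[(m-1)2^{-l},(m+1)2^{-l}]$.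
   Context: $K(x,\mathbf U)$ denotes the row vector $(K(x,u))_{u\in\mathbf U}$ and $K(\mathbf U,\mathbf U)$ the matrix $(K(u,u'))_{u,u'\in\mathbf U}$; $\mathbf P^{-\top}=(\mathbf P^{-1})^\top$. The functions on $[0,1]$ are $\psi_{01}(x)=\dfrac{e^{-\theta x}+e^{-\theta(1-x)}}{\sqrt{2(1+e^{-\theta})}}$, $\psi_{02}(x)=\dfrac{e^{-\theta x}-e^{-\theta(1-x)}}{\sqrt{2(1-e^{-\theta})}}$, and for $l\ge1$, odd $m\in\{1,3,\dots,2^l-1\}$: $\psi_{lm}(x)=\sqrt{\dfrac{2}{\sinh(2^{1-l}\theta)}}\sinh\big(\theta(x-(m-1)2^{-l})\big)$ if $(m-1)2^{-l}\le x\le m2^{-l}$; $\psi_{lm}(x)=\sqrt{\dfrac{2}{\sinh(2^{1-l}\theta)}}\sinh\big(\theta((m+1)2^{-l}-x)\big)$ if $m2^{-l}\le x\le (m+1)2^{-l}$; and $\psi_{lm}(x)=0$ otherwise. *)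

From HB Require Import structures.
From mathcomp Require Import all_boot all_order all_algebra.
From mathcomp Require Import all_classical all_reals all_analysis.
Set Implicit Arguments. Unset Strict Implicit. Unset Printing Implicit Defensive.
Import Order.TTheory GRing.Theory Num.Theory.
Import numFieldNormedType.Exports.
Local Open Scope classical_set_scope.
Local Open Scope ring_scope.

Section Defs.
Context {R : realType}.

Definition sinhR (x : R) : R := (expR x - expR (- x)) / 2.

Definition Kexp (theta x y : R) : R := expR (- theta * `|x - y|).

Definition Msz (L : nat) : nat := (2 ^ L).+1.

Definition Upts (L : nat) (i : 'I_(Msz L)) : R := i%:R / 2%:R ^+ L.

Definition KxU (theta : R) (L : nat) (x : R) : 'rV[R]_(Msz L) :=
  \row_j Kexp theta x (Upts j).
Definition KUU (theta : R) (L : nat) : 'M[R]_(Msz L) :=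
  \matrix_(i, j) Kexp theta (Upts i) (Upts j).
Definition fU (L : nat) (f : R -> R) : 'cV[R]_(Msz L) :=
  \col_i f (Upts i).

Definition psi01 (theta x : R) : R :=
  (expR (- theta * x) + expR (- theta * (1 - x))) /
    Num.sqrt (2 * (1 + expR (- theta))).
Definition psi02 (theta x : R) : R :=
  (expR (- theta * x) - expR (- theta * (1 - x))) /
    Num.sqrt (2 * (1 - expR (- theta))).
Definition psilm (theta : R) (l m : nat) (x : R) : R :=
  let c := Num.sqrt (2 / sinhR (2%:R ^- l.-1 * theta)) in
  let a := (m%:R - 1) / 2%:R ^+ l in
  let b := m%:R / 2%:R ^+ l in
  let e := (m%:R + 1) / 2%:R ^+ l in
  if (a <= x) && (x <= b) then c * sinhR (theta * (x - a))
  else if (b <= x) && (x <= e) then c * sinhR (theta * (e - x))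
  else 0.
(* Note: 2^(1-l) = 2^-(l-1) for l >= 1. *)

End Defs.

Inductive psi_label := L01 | L02 | Llm of nat & nat.

Definition valid_label (L : nat) (lb : psi_label) : Prop :=
  match lb with
  | L01 | L02 => True
  | Llm l m => (1 <= l <= L)%N /\ odd m /\ (m < 2 ^ l)%N
  end.

Definition psi {R : realType} (theta : R) (lb : psi_label) : R -> R :=
  match lb with
  | L01 => psi01 theta
  | L02 => psi02 theta
  | Llm l m => psilm theta l m
  end.

Definition gauss_law {R : realType} (m v : R) : set R -> \bar R :=
  if v == 0 then (\d_m : set R -> \bar R)
  else normal_prob m (Num.sqrt v).

Definition centered_gauss_vec {R : realType} (d : measure_display)
  (T : measurableType d) (Pr : probability T R) (n : nat)
  (X : 'I_n -> T -> R) (S : 'M[R]_n) : Prop :=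
  forall (a : 'rV[R]_n) (A : set R), measurable A ->
    Pr [set w | A (\sum_(i < n) a 0 i * X i w)] = gauss_law 0 ((a *m S *m a^T) 0 0) A.

Definition centered_GP {R : realType} (d : measure_display)
  (T : measurableType d) (Pr : probability T R) (F : R -> T -> R)
  (K : R -> R -> R) : Prop :=
  (forall t, measurable_fun setT (F t)) /\
  forall (n : nat) (t : 'I_n -> R), (forall i, 0 <= t i <= 1) ->
    centered_gauss_vec Pr (fun i => F (t i)) (\matrix_(i, j) K (t i) (t j)).

From HB Require Import structures.
From mathcomp Require Import all_boot all_order all_algebra.
From mathcomp Require Import all_classical all_reals all_analysis.
From mathcomp.algebra_tactics Require Import ring lra.
From mathcomp Require Import zify.
Set Implicit Arguments. Unset Strict Implicit. Unset Printing Implicit Defensive.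
Import Order.TTheory GRing.Theory Num.Theory.
Local Open Scope classical_set_scope.
Local Open Scope ring_scope.

(* Let s(y) = sinh(theta y).  K is the covariance of the stationary
   Ornstein-Uhlenbeck process, and the covariance of that process on [a, e]
   pinned to 0 at a and e is the bridge kernel
     G_[a,e](x, u) = 2 s(min(x,u) - a) s(e - max(x,u)) / s(e - a).
   One checks that K(x,u) - psi_01(x) psi_01(u) - psi_02(x) psi_02(u) = G_[0,1](x,u)
   and that splitting [a, e] at its midpoint b peels off one hat function:
   G_[a,e] - G_[a,b] - G_[b,e] = psi(x) psi(u), psi the normalised hat of [a, e].
   After L levels of splitting, K(x, u) - sum_j psi_j(x) psi_j(u) is a sum of
   bridge kernels over the dyadic intervals of length 2^-L, which vanishes as
   soon as u is a grid point.  Hence K(x, U) = phi(x) P^T and K(U, U) = P P^T for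
   P = (psi_j(U_i)).  P is invertible because K(U, U) = (rho^|i-j|) is a
   Kac-Murdock-Szego matrix, whose inverse is tridiagonal.  The rest is linear
   algebra: K(U, U)^-1 = P^-T P^-1, and P^-1 whitens a Gaussian vector with
   covariance P P^T. *)

Lemma big_nat_double (V : nmodType) (F : nat -> V) n :
  \sum_(0 <= k < n.*2) F k = \sum_(0 <= k < n) (F k.*2 + F k.*2.+1).
Proof.
elim: n => [|n IH]; first by rewrite !big_geq.
by rewrite doubleS !big_nat_recr //= IH addrA.
Qed.

Lemma big_ord_dyadic (V : nmodType) L (G : nat -> V) :
  \sum_(j < (2 ^ L).+1) G j
  = G 0%N + \sum_(0 <= l < L) \sum_(0 <= k < 2 ^ l) G (2 ^ l + k)%N + G (2 ^ L)%N.
Proof.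
rewrite -(big_mkord xpredT G) big_nat_recr //= big_ltn ?expn_gt0 //; congr (_ + _ + _).
elim: L => [|L IH]; first by rewrite !big_geq.
have L0 : (0 < 2 ^ L)%N by rewrite expn_gt0.
rewrite big_nat_recr //= -IH (@big_cat_nat _ _ _ (2 ^ L)) //=; last by rewrite leq_pexp2l.
congr (_ + _); rewrite -{1}[(2 ^ L)%N]add0n big_addn expnS.
rewrite (_ : 2 * 2 ^ L - 2 ^ L = 2 ^ L)%N; last by lia.
by apply: eq_bigr => k _; rewrite addnC.
Qed.

Lemma sum_ord_dirac {R : pzSemiRingType} n (F : nat -> R) m :
  \sum_(j < n) (j == m :> nat)%:R * F j = if (m < n)%N then F m else 0.
Proof.
elim: n => [|n IH]; first by rewrite big_ord0.
rewrite big_ord_recr /= IH ltnS.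
by case: (ltngtP m n) => [mn|nm|->]; rewrite ?mul0r ?addr0 ?mul1r ?add0r.
Qed.

Lemma natr_distn (R : numDomainType) (m n : nat) : (`|m - n|)%N%:R = `|m%:R - n%:R : R|.
Proof. by rewrite natr_absz intr_norm intrB. Qed.

Lemma invmx_mul_tr (R : comUnitRingType) n (P : 'M[R]_n) : P \in unitmx ->
  invmx (P *m P^T) = (invmx P)^T *m invmx P.
Proof.
move=> Pu; have PPu : P *m P^T \in unitmx by rewrite unitmx_mul unitmx_tr Pu.
have PPK : P *m P^T *m ((invmx P)^T *m invmx P) = 1%:M.
  by rewrite mulmxA -(mulmxA P) -trmx_mul mulVmx // trmx1 mulmx1 mulmxV.
by rewrite -[invmx _]mulmx1 -PPK mulmxA mulVmx ?mul1mx.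
Qed.

Lemma invmx_factor_whiten (R : comUnitRingType) n (P : 'M[R]_n) : P \in unitmx ->
  invmx P *m (P *m P^T) *m (invmx P)^T = 1%:M.
Proof.
by move=> Pu; rewrite mulmxA mulVmx // mul1mx -trmx_mul mulVmx // trmx1.
Qed.

Section Sinh.
Context {R : realType}.
Implicit Types x t H : R.

Lemma sinhR0 : sinhR (0 : R) = 0.
Proof. by rewrite /sinhR oppr0 subrr mul0r. Qed.

Lemma sinhRN x : sinhR (- x) = - sinhR x.
Proof. by rewrite /sinhR opprK -mulNr opprB. Qed.

Lemma sinhR_gt0 x : 0 < x -> 0 < sinhR x.
Proof. by move=> x_gt0; rewrite /sinhR divr_gt0 // subr_gt0 ltr_expR; lra. Qed.

Lemma sinhR_eq0 x : (sinhR x == 0) = (x == 0).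
Proof.
case: (ltrgt0P x) => [x_gt0|x_lt0|->]; last by rewrite sinhR0 !eqxx.
  by rewrite !gt_eqF // sinhR_gt0.
by rewrite -oppr_eq0 -sinhRN !gt_eqF ?sinhR_gt0 // oppr_gt0.
Qed.

Lemma sinhR_double_sub H t :
  sinhR (H + H - t) * sinhR H - sinhR (H - t) * sinhR (H + H) = sinhR t * sinhR H.
Proof.
rewrite /sinhR !expRN !expRD !expRN.
have eH := expR_gt0 H; have et := expR_gt0 t.
by field; rewrite !gt_eqF.
Qed.

End Sinh.

Section Bridge.
Context {R : realType}.
Variable theta : R.
Hypothesis theta_gt0 : 0 < theta.
Implicit Types a b e x u y : R.

Local Notation sh y := (sinhR (theta * y)).

Definition bridge_cov a e x u : R :=
  if (a <= Num.min x u) && (Num.max x u <= e) then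
    2 * sh (Num.min x u - a) * sh (e - Num.max x u) / sh (e - a)
  else 0.

Definition hat a b e x : R :=
  if a <= x <= b then sh (x - a) else if b <= x <= e then sh (e - x) else 0.

Lemma bridge_covC a e : commutative (bridge_cov a e).
Proof. by move=> x u; rewrite /bridge_cov minC maxC. Qed.

Lemma bridge_covE a e x u : a <= x -> x <= u -> u <= e ->
  bridge_cov a e x u = 2 * sh (x - a) * sh (e - u) / sh (e - a).
Proof. by move=> ax xu ue; rewrite /bridge_cov min_l // max_r // ax ue. Qed.

Lemma bridge_cov_out a e x u : (x <= a) || (e <= x) -> bridge_cov a e x u = 0.
Proof.
rewrite /bridge_cov; case: ifP => // /andP[amin maxe] /orP[xa|ex].
  have -> : Num.min x u = a by apply/eqP; rewrite eq_le amin ge_min xa.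
  by rewrite subrr mulr0 sinhR0 !(mulr0, mul0r).
have -> : Num.max x u = e by apply/eqP; rewrite eq_le maxe le_max ex.
by rewrite subrr mulr0 sinhR0 !(mulr0, mul0r).
Qed.

Lemma hat_l a b e x : a <= x <= b -> hat a b e x = sh (x - a).
Proof. by rewrite /hat => ->. Qed.

Lemma hat_r a b e x : b - a = e - b -> b <= x <= e -> hat a b e x = sh (e - x).
Proof.
move=> mid /andP[bx xe]; rewrite /hat bx xe; case: ifP => // /andP[ax xb].
have -> : x = b by apply/eqP; rewrite eq_le xb bx.
by rewrite mid.
Qed.

Lemma hat_out a b e x : a <= b <= e -> (x < a) || (e < x) -> hat a b e x = 0.
Proof.
move=> /andP[ab be] /orP[xa|ex]; rewrite /hat.
  by rewrite [a <= x]leNgt xa [b <= x]leNgt (lt_le_trans xa ab).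
by rewrite [x <= b]leNgt (le_lt_trans be ex) [x <= e]leNgt ex !andbF.
Qed.

Lemma sh_subC y z : sh (y - z) = - sh (z - y).
Proof. by rewrite -opprB mulrN sinhRN. Qed.

Lemma sh_neq0 y : y != 0 -> sh y != 0.
Proof. by move=> y0; rewrite sinhR_eq0 mulf_neq0 ?(gt_eqF theta_gt0). Qed.

Lemma sh_ratio_split a b e y : a != b -> b - a = e - b ->
  sh (e - y) / sh (e - a) - sh (b - y) / sh (b - a) = sh (y - a) / sh (e - a).
Proof.
move=> ab mid; have eE : e = b + b - a by lra.
have := sinhR_double_sub (theta * (b - a)) (theta * (y - a)).
have -> : theta * (b - a) + theta * (b - a) - theta * (y - a) = theta * (e - y).
  by rewrite eE; ring.
have -> : theta * (b - a) - theta * (y - a) = theta * (b - y) by ring.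
have -> : theta * (b - a) + theta * (b - a) = theta * (e - a) by rewrite eE; ring.
have sba_neq0 : sh (b - a) != 0 by rewrite sh_neq0 // subr_eq0 eq_sym.
have sea_neq0 : sh (e - a) != 0.
  rewrite sh_neq0 // (_ : e - a = 2 * (b - a)); last by rewrite eE; ring.
  by rewrite mulf_neq0 ?pnatr_eq0 // subr_eq0 eq_sym.
move=> double_sub.
have -> : sh (e - y) / sh (e - a) - sh (b - y) / sh (b - a)
    = (sh (e - y) * sh (b - a) - sh (b - y) * sh (e - a)) / (sh (b - a) * sh (e - a)).
  by field; rewrite sba_neq0 sea_neq0.
by rewrite double_sub; field; rewrite sba_neq0 sea_neq0.
Qed.

Lemma bridge_cov_split_left a b e x u : a < b -> b - a = e - b ->
  a <= x -> x <= u -> u <= b ->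
  bridge_cov a e x u - bridge_cov a b x u = 2 / sh (e - a) * sh (x - a) * sh (u - a).
Proof.
move=> ab mid ax xu ub; rewrite !bridge_covE //; last by lra.
transitivity (2 * sh (x - a) * (sh (e - u) / sh (e - a) - sh (b - u) / sh (b - a))).
  by ring.
by rewrite sh_ratio_split ?lt_eqF //; ring.
Qed.

Lemma bridge_cov_split_right a b e x u : a < b -> b - a = e - b ->
  b <= x -> x <= u -> u <= e ->
  bridge_cov a e x u - bridge_cov b e x u = 2 / sh (e - a) * sh (e - x) * sh (e - u).
Proof.
move=> ab mid bx xu ue; rewrite !bridge_covE //; last by lra.
have be : b < e by lra.
have := @sh_ratio_split e b a x (negbT (gt_eqF be)) (ltac:(lra)).
rewrite (sh_subC a x) (sh_subC a e) (sh_subC b x) (sh_subC b e) (sh_subC x e) !invrN !mulrNN => ratio.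
transitivity (2 * sh (e - u) * (sh (x - a) / sh (e - a) - sh (x - b) / sh (e - b))).
  by ring.
by rewrite ratio; ring.
Qed.

Lemma bridge_cov_split a b e x u : a < b -> b - a = e - b ->
  bridge_cov a e x u - bridge_cov a b x u - bridge_cov b e x u
  = 2 / sh (e - a) * hat a b e x * hat a b e u.
Proof.
move=> ab mid; have abe : a <= b <= e by apply/andP; split; lra.
wlog xu : x u / x <= u.
  move=> W; case: (lerP x u) => [|/ltW ux]; first exact: W.
  by rewrite !(bridge_covC _ _ x) W // mulrAC.
have [xa|ax] := ltrP x a.
  rewrite !bridge_cov_out ?(ltW xa) ?(le_trans (ltW xa) (ltW ab)) //.
  by rewrite (@hat_out a b e x abe) ?xa // !(mulr0, mul0r, subr0).
have [eu|ue] := ltrP e u.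
  rewrite !(bridge_covC _ _ x) !bridge_cov_out ?(ltW eu) ?(le_trans _ (ltW eu)) ?orbT //; last by lra.
  by rewrite (@hat_out a b e u abe) ?eu ?orbT // !(mulr0, mul0r, subr0).
have [ub|bu] := lerP u b.
  rewrite (@bridge_cov_out b e x u) ?(le_trans xu ub) // subr0 bridge_cov_split_left //.
  by rewrite !hat_l ?ax ?(le_trans xu ub) ?(le_trans ax xu).
have [xb|bx] := lerP x b.
  rewrite (bridge_covC a b) (@bridge_cov_out a b u x) ?(ltW bu) ?orbT //.
  rewrite (@bridge_cov_out b e x u) ?xb //.
  rewrite bridge_covE // hat_l ?ax // (@hat_r a b e u mid) ?(ltW bu) ?ue // !subr0.
  by ring.
rewrite (@bridge_cov_out a b x u) ?(ltW bx) ?orbT // subr0 bridge_cov_split_right ?(ltW bx) //.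
by rewrite !(@hat_r a b e _ mid) // ?ue ?(ltW bx) ?(le_trans xu ue) ?(le_trans (ltW bx) xu).
Qed.

Lemma Kexp_psi0_bridge x u : 0 <= x <= 1 -> 0 <= u <= 1 ->
  Kexp theta x u - psi01 theta x * psi01 theta u - psi02 theta x * psi02 theta u
  = bridge_cov 0 1 x u.
Proof.
wlog xu : x u / x <= u.
  move=> W hx hu; case: (lerP x u) => [xu|/ltW ux]; first exact: W.
  rewrite bridge_covC -W // /Kexp distrC.
  by rewrite (mulrC (psi01 theta x)) (mulrC (psi02 theta x)).
move=> /andP[x0 _] /andP[_ u1].
have eN_lt1 : expR (- theta) < 1 by rewrite expR_lt1 oppr_lt0.
have eN_gt0 := expR_gt0 (- theta).
rewrite bridge_covE // /Kexp ler0_norm ?subr_le0 // !subr0 opprB.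
rewrite /psi01 /psi02 !mulf_div -!expr2 !sqr_sqrtr; try lra.
have -> : - theta * (u - x) = theta * x - theta * u by ring.
have -> : - theta * (1 - x) = theta * x - theta by ring.
have -> : - theta * (1 - u) = theta * u - theta by ring.
have -> : theta * (1 - u) = theta - theta * u by ring.
rewrite !mulNr mulr1 /sinhR !expRN !expRD !expRN.
have := expR_gt0 (theta * x); have := expR_gt0 (theta * u).
have : 1 < expR theta by rewrite -expR0 ltr_expR.
set X := expR (theta * x); set U := expR (theta * u); set E := expR theta => E_gt1 U_gt0 X_gt0.
have EE : E * E - 1 != 0 by rewrite gt_eqF //; nra.
by field; rewrite EE !gt_eqF //; lra.
Qed.

Definition dyadic_bridge (l : nat) x u : R :=
  \sum_(0 <= k < 2 ^ l) bridge_cov (k%:R / 2%:R ^+ l) (k.+1%:R / 2%:R ^+ l) x u.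

Lemma psilm_hat l m x : psilm theta l m x =
  Num.sqrt (2 / sinhR (2%:R ^- l.-1 * theta)) *
  hat ((m%:R - 1) / 2%:R ^+ l) (m%:R / 2%:R ^+ l) ((m%:R + 1) / 2%:R ^+ l) x.
Proof. by rewrite /psilm /hat; case: ifP => _; [|case: ifP => _]; rewrite ?mulr0. Qed.

Lemma bridge_cov_refine l k x u :
  bridge_cov (k%:R / 2%:R ^+ l) (k.+1%:R / 2%:R ^+ l) x u
  - bridge_cov (k.*2%:R / 2%:R ^+ l.+1) (k.*2.+1%:R / 2%:R ^+ l.+1) x u
  - bridge_cov (k.*2.+1%:R / 2%:R ^+ l.+1) (k.*2.+2%:R / 2%:R ^+ l.+1) x u
  = psilm theta l.+1 k.*2.+1 x * psilm theta l.+1 k.*2.+1 u.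
Proof.
have N0 : 0 < (2%:R : R) ^+ l by rewrite exprn_gt0.
have k2E : (k.*2%:R : R) = 2 * k%:R by rewrite -mul2n natrM.
have k21E : (k.*2.+1%:R : R) = 2 * k%:R + 1 by rewrite -addn1 -mul2n natrD natrM.
have k22E : (k.*2.+2%:R : R) = 2 * k%:R + 2 by rewrite -addn2 -mul2n natrD natrM.
have k1E : (k.+1%:R : R) = k%:R + 1 by rewrite -addn1 natrD.
have -> : (k.*2%:R : R) / 2%:R ^+ l.+1 = k%:R / 2%:R ^+ l.
  by rewrite k2E exprS; field; rewrite gt_eqF.
have -> : (k.*2.+2%:R : R) / 2%:R ^+ l.+1 = k.+1%:R / 2%:R ^+ l.
  by rewrite k22E k1E exprS; field; rewrite gt_eqF.
have left_lt : k%:R / 2%:R ^+ l < k.*2.+1%:R / 2%:R ^+ l.+1 :> R.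
  rewrite -subr_gt0 (_ : _ - _ = (2%:R ^+ l.+1)^-1) ?invr_gt0 ?exprn_gt0 //.
  by rewrite k21E exprS; field; rewrite gt_eqF.
have midpoint : k.*2.+1%:R / 2%:R ^+ l.+1 - k%:R / 2%:R ^+ l
    = k.+1%:R / 2%:R ^+ l - k.*2.+1%:R / 2%:R ^+ l.+1 :> R.
  by rewrite k21E k1E exprS; field; rewrite gt_eqF.
rewrite bridge_cov_split //.
rewrite !psilm_hat /=.
have -> : ((k.*2.+1)%:R - 1 : R) / 2%:R ^+ l.+1 = k%:R / 2%:R ^+ l.
  by rewrite k21E exprS; field; rewrite gt_eqF.
have -> : ((k.*2.+1)%:R + 1 : R) / 2%:R ^+ l.+1 = k.+1%:R / 2%:R ^+ l.
  by rewrite k21E k1E exprS; field; rewrite gt_eqF.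
have -> : theta * (k.+1%:R / 2%:R ^+ l - k%:R / 2%:R ^+ l) = 2%:R ^- l * theta.
  by rewrite k1E; field; rewrite gt_eqF.
have c_ge0 : 0 <= 2 / sinhR (2%:R ^- l * theta).
  by rewrite divr_ge0 // ltW // sinhR_gt0 // mulr_gt0 // invr_gt0.
by rewrite mulrACA -expr2 sqr_sqrtr //; ring.
Qed.

Lemma Kexp_psi_levels l x u : 0 <= x <= 1 -> 0 <= u <= 1 ->
  Kexp theta x u - psi01 theta x * psi01 theta u - psi02 theta x * psi02 theta u
  - \sum_(0 <= l' < l) \sum_(0 <= k < 2 ^ l')
      psilm theta l'.+1 k.*2.+1 x * psilm theta l'.+1 k.*2.+1 u
  = dyadic_bridge l x u.
Proof.
move=> hx hu; elim: l => [|l IH].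
  by rewrite big_geq // subr0 /dyadic_bridge big_nat1 expr0 !divr1 Kexp_psi0_bridge.
rewrite big_nat_recr //= opprD addrA IH /dyadic_bridge expnS mul2n big_nat_double.
rewrite -sumrB; apply: eq_bigr => k _.
by rewrite -bridge_cov_refine; ring.
Qed.

Lemma dyadic_bridge_node l i x : dyadic_bridge l x (i%:R / 2%:R ^+ l) = 0.
Proof.
have N0 : 0 < ((2%:R : R) ^+ l)^-1 by rewrite invr_gt0 exprn_gt0.
rewrite /dyadic_bridge big1 // => k _; rewrite bridge_covC bridge_cov_out //.
by rewrite !ler_pM2r // !ler_nat; case: leqP; rewrite ?orbT.
Qed.

End Bridge.

Definition dyadic_label (L n : nat) : psi_label :=
  if n == 0%N then L01 else if n == (2 ^ L)%N then L02
  else Llm (trunc_log 2 n).+1 (n - 2 ^ trunc_log 2 n).*2.+1.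

Lemma dyadic_label_level L l k : (l < L)%N -> (k < 2 ^ l)%N ->
  dyadic_label L (2 ^ l + k) = Llm l.+1 k.*2.+1.
Proof.
move=> lL kl; have := expn_gt0 2 l; have : (2 ^ l.+1 <= 2 ^ L)%N by rewrite leq_pexp2l.
rewrite expnS => lL' l0.
rewrite /dyadic_label ifF; last by apply/eqP; lia.
rewrite ifF; last by apply/eqP; lia.
have -> : trunc_log 2 (2 ^ l + k) = l by apply: trunc_log_eq => //; rewrite expnS; lia.
by rewrite addKn.
Qed.

Lemma dyadic_label_valid L n : (n <= 2 ^ L)%N -> valid_label L (dyadic_label L n).
Proof.
move=> nL; rewrite /dyadic_label; case: eqP => // n0; case: eqP => // nL'.
have /andP[lo hi] := @trunc_log_bounds 2 n isT (ltac:(lia)).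
move: lo hi; set t := trunc_log 2 n; rewrite expnS => lo hi.
have tL : (t < L)%N.
  by rewrite ltnNge; apply/negP => /(leq_pexp2l (isT : 0 < 2)%N); lia.
by rewrite /= odd_double expnS; split; lia.
Qed.

Lemma dyadic_label_inj L a b : (a <= 2 ^ L)%N -> (b <= 2 ^ L)%N ->
  dyadic_label L a = dyadic_label L b -> a = b.
Proof.
move=> aL bL; rewrite /dyadic_label.
case: (a =P 0%N) => a0; case: (b =P 0%N) => b0; try by rewrite ?a0 ?b0.
- by case: (b =P (2 ^ L)%N).
- by case: (a =P (2 ^ L)%N).
case: (a =P (2 ^ L)%N) => aL'; case: (b =P (2 ^ L)%N) => bL'; try by rewrite ?aL' ?bL'.
case=> t_eq; have pa : (2 ^ trunc_log 2 a <= a)%N by apply: trunc_logP; lia.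
have pb : (2 ^ trunc_log 2 b <= b)%N by apply: trunc_logP; lia.
by rewrite t_eq in pa *; rewrite -!muln2 => h; lia.
Qed.

Lemma dyadic_label_surj L lb : valid_label L lb ->
  exists2 n, (n <= 2 ^ L)%N & dyadic_label L n = lb.
Proof.
case: lb => [||l m] /=; first by exists 0%N.
  by exists (2 ^ L)%N; rewrite // /dyadic_label expn_eq0 eqxx.
case=> /andP[l1 lL] [m_odd ml].
move: l1; case: l lL ml => // l' lL ml _.
have m_eq := odd_double_half m; rewrite m_odd -muln2 /= in m_eq.
have : (2 ^ l'.+1 <= 2 ^ L)%N by rewrite leq_pexp2l.
move: ml; rewrite expnS => ml l'L.
exists (2 ^ l' + m./2)%N; first by lia.
by rewrite dyadic_label_level; [congr Llm; rewrite -muln2| |]; lia.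
Qed.

Section KacMurdockSzego.
Variables (F : fieldType) (rho : F) (n : nat).
Hypotheses (rho2 : 1 - rho ^+ 2 != 0) (n_gt0 : (0 < n)%N).

Definition kms_mx : 'M[F]_n.+1 := \matrix_(i, j) rho ^+ (`|i - j|)%N.

Definition kms_diag (k : nat) : F := if (k == 0)%N || (k == n) then 1 else 1 + rho ^+ 2.

Definition kms_inv : 'M[F]_n.+1 := \matrix_(j, k)
  (((j == k :> nat)%:R * kms_diag k - rho * ((j.+1 == k)%:R + (j == k.+1 :> nat)%:R))
   / (1 - rho ^+ 2)).

Lemma mulmx_kms_inv_entry {i k : nat} : (i <= n)%N -> (k <= n)%N ->
  kms_diag k * rho ^+ (`|i - k|)%N
  - rho * ((if (0 < k)%N then rho ^+ (`|i - k.-1|)%N else 0)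
           + (if (k < n)%N then rho ^+ (`|i - k.+1|)%N else 0))
  = (i == k)%:R * (1 - rho ^+ 2).
Proof.
move=> i_le k_le; rewrite /kms_diag.
case: (ltngtP i k) => [ik|ki|<-].
- have -> : (`|i - k| = (`|i - k.-1|).+1)%N by lia.
  have -> : (0 < k)%N = true by lia.
  have -> : (k == 0)%N = false by lia.
  have [kn|kn] := ltnP k n.
    have -> : (`|i - k.+1| = (`|i - k.-1|).+2)%N by lia.
    have -> : (k == n) = false by lia.
    by rewrite /= !exprS mul0r; ring.
  have -> : (k == n) = true by lia.
  by rewrite /= exprS mul0r addr0; ring.
- have -> : (`|i - k| = (`|i - k.+1|).+1)%N by lia.
  have -> : (k < n)%N = true by lia.
  have -> : (k == n) = false by lia.
  have [->|k0] := posnP k; first by rewrite /= exprS mul0r; ring.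
  have -> : (`|i - k.-1| = (`|i - k.+1|).+2)%N by lia.
  by rewrite /= !exprS mul0r; ring.
- rewrite distnn expr0 mulr1.
  have -> : (`|i - i.+1| = 1)%N by lia.
  have [->|i0] := posnP i; first by rewrite n_gt0 /=; ring.
  have -> : (`|i - i.-1| = 1)%N by lia.
  have [iN|iN] := ltnP i n; last have -> : i = n by lia.
    by rewrite ltn_eqF //=; ring.
  by rewrite eqxx /=; ring.
Qed.

Lemma mulmx_kms_inv : kms_mx *m kms_inv = 1%:M.
Proof.
apply/matrixP => i k; rewrite !mxE.
pose f (j : nat) := rho ^+ (`|i - j|)%N.
transitivity ((\sum_(j < n.+1) (kms_diag k * ((j == k :> nat)%:R * f j)
  - rho * ((j.+1 == k)%:R * f j + (j == k.+1 :> nat)%:R * f j))) / (1 - rho ^+ 2)).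
  by rewrite mulr_suml; apply: eq_bigr => j _; rewrite !mxE /f; ring.
rewrite sumrB -!mulr_sumr big_split /= !(sum_ord_dirac _ f) ltn_ord ltnS.
have -> : \sum_(j < n.+1) (j.+1 == k)%:R * f j = if (0 < k)%N then f k.-1 else 0.
  case: k => -[|k] k_lt; first by rewrite big1 // => j _; rewrite mul0r.
  transitivity (\sum_(j < n.+1) (j == k :> nat)%:R * f j); first exact: eq_bigr.
  by rewrite (sum_ord_dirac _ f) (ltnW k_lt).
by rewrite /f (mulmx_kms_inv_entry (ltn_ord i) (ltn_ord k)) mulfK.
Qed.
End KacMurdockSzego.

Lemma centered_gauss_vec_mul (R : realType) d (T : measurableType d)
    (Pr : probability T R) n m (X : 'I_n -> T -> R) S (A : 'M[R]_(m, n)) :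
  centered_gauss_vec Pr X S ->
  centered_gauss_vec Pr (fun j w => \sum_i A j i * X i w) (A *m S *m A^T).
Proof.
move=> XS a B mB; have sum_mul w :
    \sum_j a 0 j * (\sum_i A j i * X i w) = \sum_i (a *m A) 0 i * X i w.
  under eq_bigr do rewrite mulr_sumr.
  rewrite exchange_big; apply: eq_bigr => i _; rewrite mxE mulr_suml.
  by apply: eq_bigr => j _; rewrite mulrA.
have -> : [set w | B (\sum_j a 0 j * \sum_i A j i * X i w)]
        = [set w | B (\sum_i (a *m A) 0 i * X i w)].
  by apply/funext => w /=; rewrite sum_mul.
by rewrite (XS (a *m A) B mB) trmx_mul !mulmxA.
Qed.

Lemma psilm_out {R : realType} (theta : R) l m x :
  ~ ((m%:R - 1) / 2%:R ^+ l <= x <= (m%:R + 1) / 2%:R ^+ l) -> psilm theta l m x = 0.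
Proof.
have N0 : 0 < ((2%:R : R) ^+ l)^-1 by rewrite invr_gt0 exprn_gt0.
move/negP; rewrite negb_and -!ltNge => out; rewrite psilm_hat hat_out ?mulr0 //.
by apply/andP; split; rewrite ler_pM2r //; lra.
Qed.

Section Expansion.
Context {R : realType}.
Variables (theta : R) (L : nat).
Hypothesis theta_gt0 : 0 < theta.

Lemma Upts_in01 (i : 'I_(Msz L)) : 0 <= (Upts i : R) <= 1.
Proof.
have N0 : 0 < (2%:R : R) ^+ L by rewrite exprn_gt0.
by rewrite /Upts divr_ge0 ?ler0n ?(ltW N0) //= ler_pdivrMr // mul1r -natrX ler_nat -ltnS.
Qed.

Definition psi_mx : 'M[R]_(Msz L) := \matrix_(i, j) psi theta (dyadic_label L j) (Upts i).

Definition psi_row (x : R) : 'rV[R]_(Msz L) := \row_j psi theta (dyadic_label L j) x.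

Lemma Kexp_Upts_expansion x (i : 'I_(Msz L)) : 0 <= x <= 1 ->
  Kexp theta x (Upts i)
  = \sum_(j < Msz L) psi theta (dyadic_label L j) x * psi theta (dyadic_label L j) (Upts i).
Proof.
move=> x01; have := Kexp_psi_levels theta_gt0 L x01 (Upts_in01 i).
rewrite dyadic_bridge_node => /eqP; rewrite subr_eq0 => /eqP levels.
rewrite (big_ord_dyadic L (fun n => psi theta (dyadic_label L n) x
  * psi theta (dyadic_label L n) (Upts i))) /=.
rewrite (_ : dyadic_label L (2 ^ L) = L02); last by rewrite /dyadic_label expn_eq0 eqxx.
under eq_big_nat => l /andP[_ lL] do
  under eq_big_nat => k /andP[_ kl] do rewrite dyadic_label_level //.
by rewrite /= -levels; ring.
Qed.

Lemma KxU_factor x : 0 <= x <= 1 -> KxU theta L x = psi_row x *m psi_mx^T.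
Proof.
move=> x01; apply/rowP => i; rewrite !mxE (Kexp_Upts_expansion i x01).
by apply: eq_bigr => j _; rewrite !mxE.
Qed.

Lemma KUU_factor : KUU theta L = psi_mx *m psi_mx^T.
Proof.
apply/matrixP => i k; rewrite !mxE (Kexp_Upts_expansion k (Upts_in01 i)).
by apply: eq_bigr => j _; rewrite !mxE.
Qed.

Lemma KUU_kms : KUU theta L = kms_mx (expR (- (theta / 2%:R ^+ L))) (2 ^ L).
Proof.
have N0 : 0 < (2%:R : R) ^+ L by rewrite exprn_gt0.
apply/matrixP => i j; rewrite !mxE /Kexp /Upts -expRM_natl natr_distn; congr expR.
by rewrite -mulrBl normrM (@gtr0_norm _ _^-1) ?invr_gt0 //; ring.
Qed.

Lemma KUU_unit : KUU theta L \in unitmx.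
Proof.
set rho := expR (- (theta / 2%:R ^+ L)).
have rho_lt1 : rho < 1 by rewrite expR_lt1 oppr_lt0 divr_gt0 ?exprn_gt0.
have rho_gt0 : 0 < rho := expR_gt0 _.
have rho2 : 1 - rho ^+ 2 != 0 by rewrite gt_eqF // subr_gt0 expr2; nra.
by rewrite KUU_kms; case: (mulmx1_unit (mulmx_kms_inv rho2 (expn_gt0 2 L))).
Qed.

Lemma psi_mx_unit : psi_mx \in unitmx.
Proof. by have := KUU_unit; rewrite KUU_factor unitmx_mul => /andP[]. Qed.

Lemma KxU_whiten x : 0 <= x <= 1 -> KxU theta L x *m (invmx psi_mx)^T = psi_row x.
Proof.
by move=> x01; rewrite KxU_factor // -mulmxA -trmx_mul mulVmx ?psi_mx_unit // trmx1 mulmx1.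
Qed.

End Expansion.

Theorem theorem1 (R : realType) (theta : R) (L : nat) :
  0 < theta -> (1 <= L)%N ->
  exists P : 'M[R]_(Msz L),
    [/\ P \in unitmx,
        KUU theta L = P *m P^T,
        (exists lab : 'I_(Msz L) -> psi_label,
           [/\ injective lab,
               (forall j, valid_label L (lab j)),
               (forall lb, valid_label L lb -> exists j, lab j = lb) &
               forall x : R, 0 <= x <= 1 -> forall j,
                 (KxU theta L x *m (invmx P)^T) 0 j = psi theta (lab j) x]),
        (forall (f : R -> R) (x : R), 0 <= x <= 1 ->
           KxU theta L x *m invmx (KUU theta L) *m fU L f
           = (KxU theta L x *m (invmx P)^T) *m (invmx P *m fU L f)) &
        ((forall (d : measure_display) (T : measurableType d)
                (Pr : probability T R) (F : R -> T -> R),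
           centered_GP Pr F (Kexp theta) ->
           centered_gauss_vec Pr
             (fun j w => \sum_i invmx P j i * F (Upts i) w) 1%:M) /\
        forall (l m : nat), (1 <= l)%N -> odd m ->
          forall x : R, 0 <= x <= 1 ->
            ~ ((m%:R - 1) / 2%:R ^+ l <= x <= (m%:R + 1) / 2%:R ^+ l) ->
            psilm theta l m x = 0)].
Proof.
move=> theta_gt0 _.
have Pu := psi_mx_unit L theta_gt0.
exists (psi_mx theta L); split => //.
- exact: KUU_factor.
- exists (fun j : 'I_(Msz L) => dyadic_label L j); split.
  + by move=> a b ab; apply/val_inj/(dyadic_label_inj _ _ ab); rewrite -ltnS.
  + by move=> j; apply: dyadic_label_valid; rewrite -ltnS.
  + by move=> lb /dyadic_label_surj[n nL <-]; exists (Ordinal (nL : (n < Msz L)%N)).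
  + by move=> x x01 j; rewrite KxU_whiten // mxE.
- by move=> f x _; rewrite (KUU_factor L theta_gt0) (invmx_mul_tr Pu) !mulmxA.
split=> [d T Pr F [_ GP]|l m _ _ x _]; last exact: psilm_out.
have := centered_gauss_vec_mul (invmx (psi_mx theta L)) (GP _ _ (@Upts_in01 R L)).
by rewrite -/(KUU theta L) (KUU_factor L theta_gt0) (invmx_factor_whiten Pu).
Qed.
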